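(* Let $\{|j\rangle\}_{j=1}^n$ be a fixed orthonormal (reference) basis of an $n$-dimensional Hilbert space, and let $Z_1,\dots,Z_n$ be Hermitian operators, all diagonal in the reference basis, with $\operatorname{tr}Z_jZ_k=\delta_{jk}$. Define, for a state $\rho$, \[ \mathcal{C}(\rho):=\min_{\{p_l,|\psi_l\rangle\}}\sum_lp_l\,\mathcal{F}_1\Big(e^{i\sum_j\theta_jZ_j}|\psi_l\rangle\langle\psi_l|e^{-i\sum_j\theta_jZ_j}\Big), \] the minimum over all ensemble decompositions $\rho=\sum_lp_l|\psi_l\rangle\langle\psi_l|$. Then for every state $\rho$, \[ 0\le\mathcal{C}(\rho)\le\frac{4(n-1)}{n^2}, \] and the upper bound is attained by $\rho=|\psi\rangle\langle\psi|$ with $|\psi\rangle=\frac1{\sqrt n}\sum_{j=1}^ne^{i\phi_j}|j\rangle$ for arbitrary real phases $\phi_j$.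
   Context: The arithmetic-mean QFI of a family $\varrho_\theta$, $\theta\in\mathbb{R}^n$, is $\mathcal{F}_1(\varrho_\theta):=\frac1n\operatorname{tr}F(\varrho_\theta)$, with $F$ the SLD-based QFI matrix $[F]_{jk}=\operatorname{Re}\operatorname{tr}(L_jL_k\varrho_\theta)$, $L_j$ Hermitian with $\partial_j\varrho_\theta=(L_j\varrho_\theta+\varrho_\theta L_j)/2$. *)

From mathcomp Require Import all_boot all_order all_algebra.
From mathcomp Require Import complex.
From mathcomp Require Import classical_sets boolp reals normedtype derive trigo.
Import numFieldNormedType.Exports.
Import GRing.Theory Num.Theory.

Set Implicit Arguments.
Unset Strict Implicit.
Unset Printing Implicit Defensive.

Local Open Scope ring_scope.

Section QFI.
Variable R : realType.
Local Notation C := R[i].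

Definition adjmx (m p : nat) (A : 'M[C]_(m, p)) : 'M[C]_(p, m) :=
  \matrix_(i, j) (A j i)^*.

Definition expi (t : R) : C := (cos t +i* sin t)%C.

(* exp(i H) for a Hermitian H that is diagonal in the reference basis:
   the diagonal matrix with entries e^{i H_kk} (H_kk real). *)
Definition expi_diag (n : nat) (H : 'M[C]_n) : 'M[C]_n :=
  diag_mx (\row_k expi (complex.Re (H k k))).

Definition gen (n : nat) (Z : 'I_n -> 'M[C]_n) (th : 'I_n -> R) : 'M[C]_n :=
  \sum_j ((th j)%:C)%C *: Z j.

Definition fam (n : nat) (Z : 'I_n -> 'M[C]_n) (psi : 'cV[C]_n)
  (th : 'I_n -> R) : 'M[C]_n :=
  let U := expi_diag (gen Z th) in U *m (psi *m adjmx psi) *m adjmx U.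

Definition upd (n : nat) (th : 'I_n -> R) (j : 'I_n) (t : R) : 'I_n -> R :=
  fun i => if i == j then th i + t else th i.

Definition pderiv (n : nat) (F : ('I_n -> R) -> 'M[C]_n) (th : 'I_n -> R)
  (j : 'I_n) : 'M[C]_n :=
  \matrix_(a, b)
    (derive1 (fun t : R => complex.Re (F (upd th j t) a b)) 0
     +i* derive1 (fun t : R => complex.Im (F (upd th j t) a b)) 0)%C.

Definition is_SLD (n : nat) (rho drho L : 'M[C]_n) : Prop :=
  adjmx L = L /\ drho = 2^-1 *: (L *m rho + rho *m L).

(* a chosen SLD (the QFI does not depend on the choice) *)
Definition SLD (n : nat) (rho drho : 'M[C]_n) : 'M[C]_n :=
  xget 0 [set L | is_SLD rho drho L].

Definition QFImx (n : nat) (F : ('I_n -> R) -> 'M[C]_n) (th : 'I_n -> R)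
  : 'M[R]_n :=
  \matrix_(j, k) complex.Re (\tr (SLD (F th) (pderiv F th j)
                                  *m SLD (F th) (pderiv F th k) *m F th)).

Definition QFI1 (n : nat) (F : ('I_n -> R) -> 'M[C]_n) (th : 'I_n -> R) : R :=
  n%:R^-1 * \tr (QFImx F th).

Definition is_state (n : nat) (rho : 'M[C]_n) : Prop :=
  [/\ adjmx rho = rho,
      (forall v : 'cV[C]_n, 0 <= (adjmx v *m rho *m v) 0 0)
    & \tr rho = 1].

Definition is_ensemble (n : nat) (rho : 'M[C]_n) (k : nat) (p : 'I_k -> R)
  (psi : 'I_k -> 'cV[C]_n) : Prop :=
  [/\ forall l, 0 <= p l,
      \sum_l p l = 1,
      forall l, adjmx (psi l) *m psi l = 1%:M
    & rho = \sum_l ((p l)%:C)%C *: (psi l *m adjmx (psi l))].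

(* C(rho) = min over ensembles of sum_l p_l F_1(family of psi_l), at the
   parameter value th (taken as infimum) *)
Definition cohQFI (n : nat) (Z : 'I_n -> 'M[C]_n) (th : 'I_n -> R)
  (rho : 'M[C]_n) : R :=
  inf [set x : R | exists k (p : 'I_k -> R) (psi : 'I_k -> 'cV[C]_n),
         is_ensemble rho p psi /\ x = \sum_l p l * QFI1 (fam Z (psi l)) th].

Definition phase_state (n : nat) (phi : 'I_n -> R) : 'cV[C]_n :=
  \col_j (((Num.sqrt (n%:R : R))^-1)%:C%C * expi (phi j)).

End QFI.

(* For a pure state psi the encoded family has derivative
   d_j rho = i [Z_j, rho], whose SLD is 2 d_j rho, so that F_jj is four times
   the variance of Z_j in the rotated state; any SLD gives the same value.
   The diagonals of the trace-orthonormal diagonal Z_j form an orthogonal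
   matrix, hence with q_a = |psi_a|^2 the variances add up to
   sum_a q_a - sum_a q_a^2, i.e. F_1 = (4/n)(1 - sum_a q_a^2).  Since
   1/n <= sum_a q_a^2 <= 1, every ensemble average lies in
   [0, 4(n-1)/n^2].  A pure state has only trivial decompositions (each
   psi_l is a phase multiple of psi), so for a state with uniform amplitudes
   every decomposition attains 4(n-1)/n^2. *)

From mathcomp Require Import all_boot all_order all_algebra.
From mathcomp Require Import complex.
From mathcomp Require Import classical_sets boolp reals normedtype derive trigo.
From mathcomp Require Import realfun ring.
Import numFieldNormedType.Exports.
Import Order.TTheory GRing.Theory Num.Theory.
Set Implicit Arguments.
Unset Strict Implicit.
Unset Printing Implicit Defensive.

Local Open Scope ring_scope.

Lemma sum_variances_orthonormal (K : comPzRingType) m n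
    (z : 'I_m -> 'I_n -> K) (q : 'I_n -> K) :
  (forall a b, \sum_j z j a * z j b = (a == b)%:R) ->
  \sum_j (\sum_a z j a ^+ 2 * q a - (\sum_a z j a * q a) ^+ 2)
  = \sum_a q a - \sum_a q a ^+ 2.
Proof.
move=> col; rewrite sumrB; congr (_ - _).
  rewrite exchange_big; apply: eq_bigr => a _.
  by rewrite -mulr_suml (eq_bigr _ (fun j _ => expr2 (z j a))) col eqxx mul1r.
under eq_bigr do rewrite expr2 big_distrlr /=.
rewrite exchange_big; apply: eq_bigr => a _; rewrite exchange_big /=.
under eq_bigr do under eq_bigr do rewrite mulrACA.
under eq_bigr do rewrite -mulr_suml col.
rewrite (bigD1 a) //= eqxx mul1r big1 ?addr0 ?expr2 // => b /negPf.
by rewrite eq_sym => ->; rewrite mul0r.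
Qed.

Lemma sum_sqr_bounds (F : realFieldType) n (p : 'I_n -> F) :
  (0 < n)%N -> (forall a, 0 <= p a) -> \sum_a p a = 1 ->
  n%:R^-1 <= \sum_a p a ^+ 2 <= 1.
Proof.
move=> n_gt0 p_ge0 p_sum; have n_neq0 : n%:R != 0 :> F by rewrite pnatr_eq0 -lt0n.
apply/andP; split.
  have : 0 <= \sum_a (p a - n%:R^-1) ^+ 2 by apply: sumr_ge0 => a _; apply: sqr_ge0.
  rewrite (eq_bigr (fun a => p a ^+ 2 - 2 * n%:R^-1 * p a + n%:R^-1 ^+ 2)); last first.
    by move=> a _; rewrite sqrrB; ring.
  rewrite big_split sumrB /= -mulr_sumr p_sum sumr_const card_ord -addrA.
  have -> : - (2 / n%:R * 1) + n%:R^-1 ^+ 2 *+ n = - n%:R^-1 :> F.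
    by rewrite -mulr_natr; field.
  by rewrite subr_ge0.
rewrite -p_sum; apply: ler_sum => a _; rewrite expr2 ler_piMl //.
by rewrite -p_sum (bigD1 a) //= lerDl sumr_ge0.
Qed.

Lemma convex_comb_bounds (F : realDomainType) k (p x : 'I_k -> F) (b : F) :
  (forall l, 0 <= p l) -> \sum_l p l = 1 -> (forall l, 0 <= x l <= b) ->
  0 <= \sum_l p l * x l <= b.
Proof.
move=> p_ge0 p_sum x_bnd; apply/andP; split.
  by apply: sumr_ge0 => l _; rewrite mulr_ge0 //; case/andP: (x_bnd l).
rewrite -[b]mul1r -p_sum mulr_suml; apply: ler_sum => l _.
by rewrite ler_wpM2l //; case/andP: (x_bnd l).
Qed.

Lemma diag_mulmxE (K : pzSemiRingType) m n (A : 'M[K]_m) (B : 'M[K]_(m, n)) a b :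
  is_diag_mx A -> (A *m B) a b = A a a * B a b.
Proof.
by move=> /diag_mxP[d ->]; rewrite mul_diag_mx !mxE eqxx mulr1n.
Qed.

Lemma mulmx_diagE (K : pzSemiRingType) m n (A : 'M[K]_(m, n)) (B : 'M[K]_n) a b :
  is_diag_mx B -> (A *m B) a b = A a b * B b b.
Proof.
by move=> /diag_mxP[d ->]; rewrite mul_mx_diag !mxE eqxx mulr1n.
Qed.

Lemma is_diag_mxM (K : pzSemiRingType) n (A B : 'M[K]_n) :
  is_diag_mx A -> is_diag_mx B -> is_diag_mx (A *m B).
Proof. by move=> /diag_mxP[d ->] /diag_mxP[e ->]; rewrite mulmx_diag diag_mx_is_diag. Qed.

Lemma sum_inv_card (F : numFieldType) n : (0 < n)%N -> \sum_(a < n) n%:R^-1 = 1 :> F.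
Proof.
move=> n_gt0; rewrite sumr_const card_ord -[_ *+ n]mulr_natl mulfV //.
by rewrite pnatr_eq0 -lt0n.
Qed.

Section EncodedFamilyQFI.
Variable R : realType.
Local Notation C := R[i].

Lemma expiM_conj (x y : R) : expi x * (expi y)^* = expi (x - y).
Proof. by rewrite /expi /= cosB sinB; congr (Complex _ _); ring. Qed.

Lemma conjC_expiM (x : R) : (expi x)^* * expi x = 1.
Proof. by rewrite mulrC expiM_conj subrr /expi cos0 sin0. Qed.

Lemma Re_realM (x : R) (z : C) : complex.Re ((x%:C)%C * z) = x * complex.Re z.
Proof. by case: z => a b /=; rewrite mul0r subr0. Qed.

Lemma is_derive_affine (a b x : R) : is_derive x 1 (fun t : R => a + t * b) b.
Proof.
have := is_deriveD (is_derive_cst a x 1)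
  (is_deriveM (is_derive_id x 1) (is_derive_cst b x 1)).
move/is_derive_eq; apply.
by rewrite /= scaler0 !add0r -[RHS]mulr1.
Qed.

Lemma derive1_expi_affine (f : R -> C) (a b : R) (c : C) :
  (forall t, f t = expi (a + t * b) * c) ->
  (derive1 (fun t => complex.Re (f t)) 0 +i* derive1 (fun t => complex.Im (f t)) 0)%C
  = 'i%C * (b%:C)%C * expi a * c.
Proof.
move=> /funext ->.
have dcos := is_derive1_comp (is_derive_cos _) (is_derive_affine a b 0).
have dsin := is_derive1_comp (is_derive_sin _) (is_derive_affine a b 0).
rewrite mul0r addr0 in dcos dsin.
case: c => cr ci; rewrite !derive1E.
have -> : (fun t => complex.Re (expi (a + t * b) * (cr +i* ci)%C))
          = (fun t => cr * cos (a + t * b) - ci * sin (a + t * b)).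
  by apply/funext => t /=; rewrite mulrC [_ * ci]mulrC.
have -> : (fun t => complex.Im (expi (a + t * b) * (cr +i* ci)%C))
          = (fun t => cr * sin (a + t * b) + ci * cos (a + t * b)).
  by apply/funext => t /=; rewrite addrC mulrC [_ * ci]mulrC.
have dRe := is_deriveB (is_deriveZ cr dcos) (is_deriveZ ci dsin).
have dIm := is_deriveD (is_deriveZ cr dsin) (is_deriveZ ci dcos).
rewrite (@derive_val _ _ _ _ _ _ _ dRe) (@derive_val _ _ _ _ _ _ _ dIm).
by rewrite /expi /= /GRing.scale /=; congr (Complex _ _); ring.
Qed.

Lemma adjmxK m p (A : 'M[C]_(m, p)) : adjmx (adjmx A) = A.
Proof. by apply/matrixP => i j; rewrite !mxE conjCK. Qed.

Lemma adjmxM m p q (A : 'M[C]_(m, p)) (B : 'M[C]_(p, q)) :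
  adjmx (A *m B) = adjmx B *m adjmx A.
Proof.
apply/matrixP => i j; rewrite !mxE rmorph_sum; apply: eq_bigr => k _.
by rewrite !mxE rmorphM mulrC.
Qed.

Lemma adjmxB m p (A B : 'M[C]_(m, p)) : adjmx (A - B) = adjmx A - adjmx B.
Proof. by apply/matrixP => i j; rewrite !mxE rmorphB. Qed.

Lemma adjmxZ m p (c : C) (A : 'M[C]_(m, p)) : adjmx (c *: A) = c^* *: adjmx A.
Proof. by apply/matrixP => i j; rewrite !mxE rmorphM. Qed.

Definition born n (v : 'cV[C]_n) (a : 'I_n) : R :=
  complex.Re (v a 0) ^+ 2 + complex.Im (v a 0) ^+ 2.

Lemma bornE n (v : 'cV[C]_n) a : ((born v a)%:C)%C = (v a 0)^* * v a 0.
Proof. by rewrite add_Re2_Im2 normCKC. Qed.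

Lemma born_ge0 n (v : 'cV[C]_n) a : 0 <= born v a.
Proof. by rewrite addr_ge0 ?sqr_ge0. Qed.

Lemma born_eq0 n (v : 'cV[C]_n) a : (born v a == 0) = (v a 0 == 0).
Proof.
by rewrite -(inj_eq (@complexI _)) add_Re2_Im2 sqrf_eq0 normr_eq0.
Qed.

Lemma adjmx_mul_self n (v : 'cV[C]_n) :
  adjmx v *m v = (((\sum_a born v a)%:C)%C)%:M.
Proof.
apply/matrixP => i j; rewrite !ord1 mxE [RHS]mxE mulr1n rmorph_sum.
by apply: eq_bigr => a _; rewrite mxE -bornE.
Qed.

Lemma adjmx_mul_self_eq1 n (v : 'cV[C]_n) :
  (adjmx v *m v = 1%:M) <-> (\sum_a born v a = 1).
Proof.
rewrite adjmx_mul_self; split => [/(congr1 (fun M : 'M_1 => M 0 0))|->].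
  by rewrite !mxE /= => -[].
by rewrite rmorph1.
Qed.

Lemma bornZ n (c : C) (v : 'cV[C]_n) : c^* * c = 1 -> born (c *: v) =1 born v.
Proof.
by move=> c1 a; apply: (@complexI R); rewrite !bornE mxE rmorphM mulrACA c1 mul1r.
Qed.

Lemma adjmx_mul_self_eq0 n (v : 'cV[C]_n) : (adjmx v *m v) 0 0 = 0 -> v = 0.
Proof.
rewrite adjmx_mul_self mxE mulr1n => -[] /eqP.
rewrite psumr_eq0 => [/allP v0|a _]; last exact: born_ge0.
apply/matrixP => a j; rewrite ord1 mxE; apply/eqP.
by rewrite -born_eq0; apply: (implyP (v0 a (mem_index_enum a))).
Qed.

Definition expval n (phi : 'cV[C]_n) (A : 'M[C]_n) : C :=
  (adjmx phi *m A *m phi) 0 0.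

Lemma expvalE n (phi : 'cV[C]_n) A :
  adjmx phi *m A *m phi = (expval phi A)%:M.
Proof. exact: mx11_scalar. Qed.

Lemma expval_herm n (phi : 'cV[C]_n) A :
  adjmx A = A -> (expval phi A)^* = expval phi A.
Proof.
move=> A_herm.
have : adjmx (adjmx phi *m A *m phi) = adjmx phi *m A *m phi.
  by rewrite !adjmxM adjmxK A_herm mulmxA.
by move/(congr1 (fun M : 'M_1 => M 0 0)); rewrite /= mxE.
Qed.

Lemma herm_diag_real n (A : 'M[C]_n) :
  adjmx A = A -> forall a, A a a = ((complex.Re (A a a))%:C)%C.
Proof.
by move=> A_herm a; rewrite RRe_real //; apply/CrealP; rewrite -{2}A_herm mxE.
Qed.

Lemma expval_diag n (phi : 'cV[C]_n) A :
  is_diag_mx A -> expval phi A = \sum_a A a a * ((born phi a)%:C)%C.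
Proof.
move=> A_diag; rewrite /expval mxE; apply: eq_bigr => a _.
by rewrite mulmx_diagE // mxE bornE -mulrA mulrCA.
Qed.

Section PureStateSLD.
Variables (n : nat) (phi : 'cV[C]_n) (A : 'M[C]_n).
Hypotheses (phi_unit : adjmx phi *m phi = 1%:M) (A_herm : adjmx A = A).
Let rho := phi *m adjmx phi.
Let D := 'i%C *: (A *m rho - rho *m A).

Let rho_herm : adjmx rho = rho.
Proof. by rewrite adjmxM adjmxK. Qed.

Let rho_idem : rho *m rho = rho.
Proof. by rewrite mulmxA -(mulmxA phi) phi_unit mulmx1. Qed.

Lemma is_SLD_pure : is_SLD rho D (2%:R *: D).
Proof.
rewrite /D; clearbody rho; split.
  rewrite !adjmxZ adjmxB (adjmxM A) (adjmxM rho) rho_herm A_herm rmorph_nat conjCi.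
  by rewrite scaleNr -scalerN opprB.
rewrite -scalemxAl -scalemxAr -scalerDr scalerA mulVf ?pnatr_eq0 // scale1r.
rewrite -scalemxAl -scalemxAr -scalerDr; congr (_ *: _).
by rewrite mulmxBl mulmxBr -mulmxA rho_idem !mulmxA rho_idem addrA subrK.
Qed.

Let rho_phi : rho *m phi = phi.
Proof. by rewrite -mulmxA phi_unit mulmx1. Qed.

Let rho_mulmx X : rho *m X *m phi = expval phi X *: phi.
Proof. by rewrite -!mulmxA (mulmxA _ X) expvalE mul_mx_scalar. Qed.

Let D_phi : D *m phi = 'i%C *: (A *m phi - expval phi A *: phi).
Proof. by rewrite -scalemxAl mulmxBl -mulmxA rho_phi rho_mulmx. Qed.

Lemma SLD_pure_mulmx L : is_SLD rho D L ->
  L *m phi = (2%:R * 'i%C) *: (A *m phi - expval phi A *: phi).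
Proof.
move=> [_ DL].
have Lphi : L *m phi + expval phi L *: phi = 2%:R *: (D *m phi).
  rewrite DL -scalemxAl scalerA mulfV ?pnatr_eq0 // scale1r.
  by rewrite mulmxDl -mulmxA rho_phi rho_mulmx.
(* sandwiching the SLD equation between adjmx phi and phi gives 2 <L> = 0 *)
have L0 : expval phi L = 0.
  have := congr1 (fun v => (adjmx phi *m v) 0 0) Lphi.
  rewrite /= D_phi mulmxDr -!scalemxAr mulmxBr -scalemxAr mulmxA expvalE.
  rewrite mulmxA expvalE phi_unit !scalemx1 subrr !scaler0 !mxE /= mulr1n.
  by move/eqP; rewrite -mulr2n mulrn_eq0 /= => /eqP.
by rewrite -[LHS]addr0 -(scale0r phi) -L0 Lphi D_phi scalerA.
Qed.

Lemma tr_SLD_sqr_pure L : is_SLD rho D L ->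
  \tr (L *m L *m rho) = 4 * (expval phi (A *m A) - expval phi A ^+ 2).
Proof.
move=> SLD_L; have [L_herm _] := SLD_L.
have -> : \tr (L *m L *m rho) = (adjmx (L *m phi) *m (L *m phi)) 0 0.
  by rewrite /rho [in LHS]mulmxA mxtrace_mulC trace_mx11 adjmxM L_herm !mulmxA.
have Ar := expval_herm phi A_herm.
rewrite SLD_pure_mulmx // adjmxZ -scalemxAl -scalemxAr scalerA mxE.
have -> : (2%:R * 'i%C)^* * (2%:R * 'i%C) = 4 :> C.
  rewrite rmorphM rmorph_nat; apply/eqP; rewrite eq_complex /=.
  by apply/andP; split; apply/eqP; ring.
rewrite adjmxB adjmxZ adjmxM A_herm mulmxBl !mulmxBr -!scalemxAl -!scalemxAr.
rewrite !mulmxA -(mulmxA _ A A) !expvalE phi_unit Ar !mxE /= mulr1n.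
congr (_ * _); ring.
Qed.

Lemma tr_SLD_pure :
  \tr (SLD rho D *m SLD rho D *m rho)
  = 4 * (expval phi (A *m A) - expval phi A ^+ 2).
Proof.
by apply: tr_SLD_sqr_pure; apply: xgetPex; exists (2%:R *: D); apply: is_SLD_pure.
Qed.

End PureStateSLD.

Section PureStateEnsemble.
Variables (n k : nat) (psi : 'cV[C]_n) (p : 'I_k -> R) (ps : 'I_k -> 'cV[C]_n).
Hypotheses (psi_unit : adjmx psi *m psi = 1%:M)
  (ens : is_ensemble (psi *m adjmx psi) p ps).
(* The Cauchy-Schwarz defects |psi_l - <psi|psi_l> psi|^2 = 1 - |<psi|psi_l>|^2
   have p-weighted sum 0, because <psi|rho|psi> = 1. *)
Let w l := (adjmx psi *m ps l) 0 0.
Let e l := ps l - w l *: psi.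

Let adjmx_w l : adjmx (ps l) *m psi = ((w l)^*)%:M.
Proof.
rewrite -[psi in LHS]adjmxK -adjmxM [adjmx psi *m _]mx11_scalar -/(w l).
by apply/matrixP => i j; rewrite !ord1 !mxE eqxx !mulr1n.
Qed.

Let norm_e l : (adjmx (e l) *m e l) 0 0 = 1 - (w l)^* * w l.
Proof.
have [_ _ ps_unit _] := ens.
rewrite adjmxB adjmxZ mulmxBl !mulmxBr -!scalemxAl -!scalemxAr.
rewrite ps_unit psi_unit adjmx_w (mx11_scalar (adjmx psi *m _)) -/(w l) !mxE /=.
by rewrite !mulr1n mulr1 subrr subr0 mulrC.
Qed.

Let sum_w : \sum_l ((p l)%:C)%C * ((w l)^* * w l) = 1.
Proof.
have [_ _ _ rho_ens] := ens.
have : (adjmx psi *m (psi *m adjmx psi) *m psi) 0 0 = 1.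
  by rewrite mulmxA psi_unit mul1mx psi_unit mxE.
rewrite rho_ens mulmx_sumr mulmx_suml summxE => <-; apply: eq_bigr => l _.
rewrite -scalemxAr -scalemxAl mxE (mulmxA (adjmx psi) (ps l)) -mulmxA adjmx_w.
by rewrite mul_mx_scalar mxE.
Qed.

Lemma pure_ensemble_parallel l :
  p l != 0 -> exists2 c : C, c^* * c = 1 & ps l = c *: psi.
Proof.
have [p_ge0 p_sum _ _] := ens.
have terms_ge0 l' : 0 <= ((p l')%:C)%C * (adjmx (e l') *m e l') 0 0.
  rewrite mulr_ge0 ?ler0c // adjmx_mul_self mxE mulr1n ler0c.
  by apply: sumr_ge0 => a _; apply: born_ge0.
have : \sum_l' ((p l')%:C)%C * (adjmx (e l') *m e l') 0 0 = 0.
  under eq_bigr do rewrite norm_e mulrBr mulr1.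
  by rewrite sumrB sum_w -rmorph_sum p_sum rmorph1 subrr.
move/eqP; rewrite psumr_eq0 => [|l' _]; last exact: terms_ge0.
move=> /allP/(_ l (mem_index_enum l)).
rewrite mulf_eq0 => /orP[/eqP[->]|/eqP e0]; first by rewrite eqxx.
move=> _; exists (w l).
  by apply/eqP; rewrite eq_sym -subr_eq0 -norm_e e0.
by apply/eqP; rewrite -subr_eq0 -/(e l) (adjmx_mul_self_eq0 e0).
Qed.

End PureStateEnsemble.

Lemma expi_diag_mulmxE n (H : 'M[C]_n) (psi : 'cV[C]_n) a :
  (expi_diag H *m psi) a 0 = expi (complex.Re (H a a)) * psi a 0.
Proof. by rewrite mul_diag_mx !mxE. Qed.

Lemma born_expi_diag n (H : 'M[C]_n) (psi : 'cV[C]_n) :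
  born (expi_diag H *m psi) =1 born psi.
Proof.
move=> a; apply: (@complexI R); rewrite !bornE expi_diag_mulmxE rmorphM.
by rewrite mulrACA conjC_expiM mul1r.
Qed.

Lemma born_phase_state n (phi : 'I_n -> R) a : born (phase_state phi) a = n%:R^-1.
Proof.
rewrite /born mxE /= !mul0r subr0 addr0 !exprMn -mulrDr cos2Dsin2 mulr1.
by rewrite exprVn sqr_sqrtr ?ler0n.
Qed.

Lemma phase_state_unit n : (0 < n)%N -> forall phi : 'I_n -> R,
  adjmx (phase_state phi) *m phase_state phi = 1%:M.
Proof.
move=> n_gt0 phi; apply/adjmx_mul_self_eq1.
under eq_bigr do rewrite born_phase_state.
exact: sum_inv_card.
Qed.

Lemma inf_bounds (E : set R) (b : R) :
  0 <= b -> (forall x, E x -> 0 <= x <= b) -> 0 <= inf E <= b.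
Proof.
move=> b_ge0 E_bnd; have [[x Ex]|E0] := pselect (exists x, E x).
  have E_lb : lbound E 0 by move=> y /E_bnd /andP[].
  rewrite lb_le_inf //=; last by exists x.
  apply: le_trans (ge_inf _ Ex) _; first by exists 0.
  by case/andP: (E_bnd x Ex).
(* the empty case relies on the convention [inf set0 = 0] *)
suff -> : E = set0 by rewrite inf0 lexx.
by apply/seteqP; split => x // Ex; apply: E0; exists x.
Qed.

Lemma inf_const (E : set R) (b : R) :
  E b -> (forall x, E x -> x = b) -> inf E = b.
Proof.
move=> Eb E_b; suff -> : E = [set b]%classic by rewrite inf1.
by apply/seteqP; split => x; [move/E_b | move=> ->].
Qed.

Section EncodedFamily.
Variables (n : nat) (Z : 'I_n -> 'M[C]_n).

Lemma Re_gen_upd th j t a :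
  complex.Re (gen Z (upd th j t) a a)
  = complex.Re (gen Z th a a) + t * complex.Re (Z j a a).
Proof.
rewrite /gen !summxE !raddf_sum (bigD1 j) //= [in RHS](bigD1 j) //= /upd eqxx.
rewrite !mxE !Re_realM mulrDl -!addrA; congr (_ + _).
by rewrite addrC; congr (_ + _); apply: eq_bigr => i /negPf ->.
Qed.

Lemma fam_pure psi th :
  fam Z psi th
  = (expi_diag (gen Z th) *m psi) *m adjmx (expi_diag (gen Z th) *m psi).
Proof. by rewrite /fam adjmxM !mulmxA. Qed.

Lemma fam_entry psi th a b :
  fam Z psi th a b = expi (complex.Re (gen Z th a a) - complex.Re (gen Z th b b))
                     * (psi a 0 * (psi b 0)^*).
Proof.
rewrite fam_pure mxE big_ord1 [adjmx _ _ _]mxE !expi_diag_mulmxE rmorphM.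
by rewrite -expiM_conj mulrACA.
Qed.

Hypotheses (Zdiag : forall j, is_diag_mx (Z j)) (Zherm : forall j, adjmx (Z j) = Z j).

Lemma pderiv_fam psi th j :
  pderiv (fam Z psi) th j = 'i%C *: (Z j *m fam Z psi th - fam Z psi th *m Z j).
Proof.
have subE (A B : 'M[C]_n) a b : (A - B) a b = A a b - B a b by rewrite !mxE.
apply/matrixP => a b; rewrite /pderiv mxE [RHS]mxE subE.
rewrite (@diag_mulmxE _ _ _ (Z j)) // (@mulmx_diagE _ _ _ _ (Z j)) //.
rewrite (derive1_expi_affine (a := complex.Re (gen Z th a a) - complex.Re (gen Z th b b))
           (b := complex.Re (Z j a a) - complex.Re (Z j b b)) (c := psi a 0 * (psi b 0)^*)).
  have -> : ((complex.Re (Z j a a) - complex.Re (Z j b b))%:C)%C = Z j a a - Z j b b.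
    rewrite [in RHS](herm_diag_real (Zherm j) a) [in RHS](herm_diag_real (Zherm j) b).
    by rewrite rmorphB.
  by rewrite fam_entry; ring.
by move=> t; rewrite fam_entry !Re_gen_upd; congr (expi _ * _); ring.
Qed.

Hypothesis Zorth : forall j k, \tr (Z j *m Z k) = (j == k)%:R.

Lemma diag_orthonormal_cols a b : \sum_j Z j a a * Z j b b = (a == b)%:R.
Proof.
pose M := \matrix_(j, a) Z j a a.
have MMt : M *m M^T = 1%:M.
  apply/matrixP => j k; rewrite [RHS]mxE -Zorth mxE /mxtrace; apply: eq_bigr => c _.
  by rewrite diag_mulmxE // !mxE.
have := congr1 (fun A : 'M_n => A a b) (mulmx1C MMt).
by rewrite !mxE => <-; apply: eq_bigr => j _; rewrite !mxE.
Qed.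

Lemma QFI1_fam psi th : adjmx psi *m psi = 1%:M ->
  QFI1 (fam Z psi) th = 4 / n%:R * (1 - \sum_a born psi a ^+ 2).
Proof.
move=> psi_unit; set phi := expi_diag (gen Z th) *m psi.
have phi_unit : adjmx phi *m phi = 1%:M.
  apply/adjmx_mul_self_eq1; under eq_bigr do rewrite born_expi_diag.
  exact/adjmx_mul_self_eq1.
have trj j : \tr (SLD (fam Z psi th) (pderiv (fam Z psi) th j)
                 *m SLD (fam Z psi th) (pderiv (fam Z psi) th j) *m fam Z psi th)
    = 4 * (expval phi (Z j *m Z j) - expval phi (Z j) ^+ 2).
  by rewrite pderiv_fam fam_pure; apply: tr_SLD_pure.
pose q a := ((born psi a)%:C)%C.
have varj j : expval phi (Z j *m Z j) - expval phi (Z j) ^+ 2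
    = \sum_a Z j a a ^+ 2 * q a - (\sum_a Z j a a * q a) ^+ 2.
  rewrite !expval_diag ?is_diag_mxM //.
  by congr (_ - _ ^+ 2); apply: eq_bigr => a _; rewrite ?diag_mulmxE // born_expi_diag.
rewrite /QFI1 /mxtrace; under eq_bigr do rewrite mxE trj varj.
rewrite -raddf_sum -mulr_sumr sum_variances_orthonormal; last first.
  exact: diag_orthonormal_cols.
have /adjmx_mul_self_eq1 sum_born := psi_unit.
have -> : \sum_a q a - \sum_a q a ^+ 2 = ((1 - \sum_a born psi a ^+ 2)%:C)%C.
  rewrite /q -rmorph_sum sum_born rmorphB rmorph1 rmorph_sum.
  by congr (_ - _); apply: eq_bigr => a _; rewrite rmorphXn.
rewrite -mulrA mulrCA; congr (_ * _).
by rewrite -(rmorph_nat (real_complex R)) -rmorphM.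
Qed.

Hypothesis n_gt0 : (0 < n)%N.

Lemma QFI1_fam_bounds psi th : adjmx psi *m psi = 1%:M ->
  0 <= QFI1 (fam Z psi) th <= 4 * (n%:R - 1) / n%:R ^+ 2.
Proof.
move=> psi_unit; have /adjmx_mul_self_eq1 sum_born := psi_unit.
have /andP[s_lb s_ub] := sum_sqr_bounds n_gt0 (born_ge0 psi) sum_born.
have n_gt0R : 0 < n%:R :> R by rewrite ltr0n.
rewrite QFI1_fam // mulr_ge0 ?divr_ge0 ?ler0n ?subr_ge0 //=.
have -> : 4 * (n%:R - 1) / n%:R ^+ 2 = 4 / n%:R * (1 - n%:R^-1) :> R.
  by field; rewrite lt0r_neq0.
by rewrite ler_wpM2l ?divr_ge0 ?ler0n ?lerB.
Qed.

Lemma QFI1_fam_uniform psi th : (forall a, born psi a = n%:R^-1) ->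
  QFI1 (fam Z psi) th = 4 * (n%:R - 1) / n%:R ^+ 2.
Proof.
move=> psi_unif; rewrite QFI1_fam; last first.
  by apply/adjmx_mul_self_eq1; under eq_bigr do rewrite psi_unif; apply: sum_inv_card.
have n_neq0 : n%:R != 0 :> R by rewrite pnatr_eq0 -lt0n.
under eq_bigr do rewrite psi_unif.
by rewrite sumr_const card_ord -mulr_natr; field.
Qed.

End EncodedFamily.

End EncodedFamilyQFI.

Theorem mainTheorem8 (R : realType) (n : nat) (hn : (0 < n)%N)
  (Z : 'I_n -> 'M[R[i]]_n)
  (Zdiag : forall j, is_diag_mx (Z j))
  (Zherm : forall j, adjmx (Z j) = Z j)
  (Zorth : forall j k, \tr (Z j *m Z k) = (j == k)%:R)
  (th : 'I_n -> R) :
  (forall rho : 'M[R[i]]_n, is_state rho ->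
     0 <= cohQFI Z th rho <= 4 * (n%:R - 1) / n%:R ^+ 2) /\
  (forall phi : 'I_n -> R,
     cohQFI Z th (phase_state phi *m adjmx (phase_state phi))
       = 4 * (n%:R - 1) / n%:R ^+ 2).
Proof.
have QFI1_bnd := QFI1_fam_bounds Zdiag Zherm Zorth hn.
have QFI1_unif := QFI1_fam_uniform Zdiag Zherm Zorth hn.
split=> [rho _ | phi].
  apply: inf_bounds => [|_ [k [p [ps [[p_ge0 p_sum ps_unit _] ->]]]]].
    by rewrite divr_ge0 ?mulr_ge0 ?exprn_ge0 ?subr_ge0 ?ler1n ?ler0n.
  by apply: convex_comb_bounds => // l; apply: QFI1_bnd.
set psi := phase_state phi.
apply: inf_const => [|_ [k [p [ps [ens ->]]]]].
  exists 1%N, (fun=> 1), (fun=> psi); split.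
    split=> //; first by rewrite big_ord1.
      by move=> _; apply: phase_state_unit.
    by rewrite big_ord1 rmorph1 scale1r.
  by rewrite big_ord1 mul1r QFI1_unif // => a; apply: born_phase_state.
have [_ p_sum _ _] := ens.
set B := (4 * _ / _); rewrite -[RHS]mul1r -p_sum mulr_suml; apply: eq_bigr => l _.
have [-> | ] := eqVneq (p l) 0; first by rewrite !mul0r.
case/(pure_ensemble_parallel (phase_state_unit hn phi) ens) => c c1 ->.
by rewrite QFI1_unif // => a; rewrite bornZ // born_phase_state.
Qed.
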